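(* Let $M(C,\bar\xi,\pi)$ be a Myller configuration with Darboux frame $(\bar\xi,\bar\mu,\bar v)$ and invariants $G,K,T$ such that $(K(s),T(s))\neq(0,0)$ for all $s$, and let $\bar W_o$ be its unit OD-vector field. Then $C$ is a $W_o$-helix in $M$ if and only if $C$ is a $\bar v$-helix in $M$.
   Context: Let $C$ be a smooth curve in $E^3$ parametrized by arclength $s$; primes denote $d/ds$. A Myller configuration $M(C,\bar\xi,\pi)$ consists of a smooth unit vector field $\bar\xi$ along $C$ and a smooth oriented plane field $\pi$ with $\bar\xi\in\pi$; $\bar v$ is the unit normal of $\pi$, $\bar\mu=\bar v\times\bar\xi$, and $\bar\xi'=G\bar\mu+K\bar v$, $\bar\mu'=-G\bar\xi+T\bar v$, $\bar v'=-K\bar\xi-T\bar\mu$. The osculating-type Darboux vector (OD-vector) is $W_o=T\bar\xi-K\bar\mu$, $\bar W_o=W_o/\|W_o\|$. $C$ is a $W_o$-helix if $\langle\bar W_o,\bar l_o\rangle$ is constant for some constant unit vector $\bar l_o$; $C$ is a $\bar v$-helix if $\langle\bar v,\bar d_v\rangle$ is constant for some constant unit vector $\bar d_v$. *)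

From Stdlib Require Import Reals.
From Coquelicot Require Import Coquelicot.
Open Scope R_scope.

Definition v3 : Type := (R * R * R)%type.
Definition vx (u : v3) : R := fst (fst u).
Definition vy (u : v3) : R := snd (fst u).
Definition vz (u : v3) : R := snd u.
Definition mk3 (a b c : R) : v3 := (a, b, c).

Definition dot (u w : v3) : R := vx u * vx w + vy u * vy w + vz u * vz w.
Definition cross (u w : v3) : v3 :=
  mk3 (vy u * vz w - vz u * vy w)
      (vz u * vx w - vx u * vz w)
      (vx u * vy w - vy u * vx w).
Definition vadd (u w : v3) : v3 := mk3 (vx u + vx w) (vy u + vy w) (vz u + vz w).
Definition vscal (k : R) (u : v3) : v3 := mk3 (k * vx u) (k * vy u) (k * vz u).
Definition vnorm (u : v3) : R := sqrt (dot u u).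

Definition in_ival (a b : Rbar) (s : R) : Prop := Rbar_lt a s /\ Rbar_lt s b.

Definition vderive (f : R -> v3) (s : R) (df : v3) : Prop :=
  is_derive (fun t => vx (f t)) s (vx df) /\
  is_derive (fun t => vy (f t)) s (vy df) /\
  is_derive (fun t => vz (f t)) s (vz df).

Definition smooth_on (a b : Rbar) (f : R -> R) : Prop :=
  forall (n : nat) (s : R), in_ival a b s -> ex_derive_n f n s.
Definition vsmooth_on (a b : Rbar) (f : R -> v3) : Prop :=
  smooth_on a b (fun t => vx (f t)) /\
  smooth_on a b (fun t => vy (f t)) /\
  smooth_on a b (fun t => vz (f t)).

(** Myller configuration M(C, xi, pi) along the curve r (parametrized by
    arclength s in (a,b)), with Darboux frame (xi, mu, v), v the unit normal
    of the oriented plane field pi, mu = v x xi, and invariants G, K, T. *)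
Definition Myller_config (a b : Rbar) (r xi mu v : R -> v3) (G K T : R -> R)
  : Prop :=
  vsmooth_on a b r /\ vsmooth_on a b xi /\ vsmooth_on a b v /\
  (forall s, in_ival a b s ->
     (exists dr, vderive r s dr /\ vnorm dr = 1) /\
     vnorm (xi s) = 1 /\ vnorm (v s) = 1 /\ dot (xi s) (v s) = 0 /\
     mu s = cross (v s) (xi s) /\
     vderive xi s (vadd (vscal (G s) (mu s)) (vscal (K s) (v s))) /\
     vderive mu s (vadd (vscal (- G s) (xi s)) (vscal (T s) (v s))) /\
     vderive v s (vadd (vscal (- K s) (xi s)) (vscal (- T s) (mu s)))).

Definition W_o (xi mu : R -> v3) (K T : R -> R) (s : R) : v3 :=
  vadd (vscal (T s) (xi s)) (vscal (- K s) (mu s)).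
Definition W_o_bar (xi mu : R -> v3) (K T : R -> R) (s : R) : v3 :=
  vscal (/ vnorm (W_o xi mu K T s)) (W_o xi mu K T s).

Definition Wo_helix (a b : Rbar) (xi mu : R -> v3) (K T : R -> R) : Prop :=
  exists l : v3, vnorm l = 1 /\
    exists c : R, forall s, in_ival a b s -> dot (W_o_bar xi mu K T s) l = c.

Definition v_helix (a b : Rbar) (v : R -> v3) : Prop :=
  exists d : v3, vnorm d = 1 /\
    exists c : R, forall s, in_ival a b s -> dot (v s) d = c.

From Stdlib Require Import Reals Lra Psatz Classical.
From Coquelicot Require Import Coquelicot.
Open Scope R_scope.

(* The unit vector field v is a curve on the unit sphere, and since
   v' = -K xi - T mu the OD-vector is W_o = v x v', with |v'|^2 = K^2 + T^2 > 0.
   So W_o_bar is the normal B = v x v' / |v'| of the Sabban frame (v, v'/|v'|, B)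
   of this spherical curve, and B' = -k v' where k = det(v, v', v'') / |v'|^3 is
   its geodesic curvature.
   If <v, d> = c is constant then d is orthogonal to v', so d lies in span(v, B)
   and <B, d>^2 = 1 - c^2; by continuity <B, d> is constant.
   Conversely, if <B, l> = c is constant then k <v', l> = 0.  Where k <> 0,
   differentiating gives <v'', l> = 0, hence l = <v, l> v + c B and <v, l> = c k,
   so c^2 k^2 = 1 - c^2.  Thus c^2 k^2 only takes the values 0 and 1 - c^2, and
   by continuity either k vanishes identically, in which case B is constant and
   <v, B> = 0, or k never vanishes, in which case <v', l> = 0 and <v, l> is
   constant. *)

Section Interval.

Variables a b : Rbar.

Lemma in_ival_locally (s : R) : in_ival a b s -> locally s (in_ival a b).
Proof.
  apply (@locally_open R_UniformSpace (fun u : R => Rbar_lt a u /\ Rbar_lt u b)); auto.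
  apply open_and; [apply open_Rbar_gt | apply open_Rbar_lt].
Qed.

Lemma in_ival_between (x y z : R) :
  in_ival a b x -> in_ival a b y -> Rmin x y <= z <= Rmax x y -> in_ival a b z.
Proof.
  intros [ax xb] [ay yb] [lez gez]. split.
  - apply Rbar_lt_le_trans with (Rmin x y); [now apply Rmin_case | exact lez].
  - apply Rbar_le_lt_trans with (Rmax x y); [exact gez | now apply Rmax_case].
Qed.

Lemma in_ival_inhabited : Rbar_lt a b -> exists s, in_ival a b s.
Proof.
  unfold in_ival; destruct a as [x| |], b as [y| |]; simpl; try tauto; intros lt.
  - exists ((x + y) / 2); simpl; lra.
  - exists (x + 1); simpl; lra.
  - exists (y - 1); simpl; lra.
  - exists 0; simpl; tauto.
Qed.

Lemma is_derive_ival_const (f : R -> R) (c s l : R) :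
  (forall t, in_ival a b t -> f t = c) -> in_ival a b s -> is_derive f s l -> l = 0.
Proof.
  intros fc Is df.
  assert (dc : is_derive (fun _ => c) s l).
  { apply (is_derive_ext_loc f); [|exact df].
    apply (filter_imp (in_ival a b)); [exact fc | exact (in_ival_locally s Is)]. }
  now rewrite <- (is_derive_unique _ _ _ dc), Derive_const.
Qed.

Lemma ival_eq_of_is_derive_0 (f : R -> R) (x y : R) :
  (forall t, in_ival a b t -> is_derive f t 0) ->
  in_ival a b x -> in_ival a b y -> f x = f y.
Proof.
  intros df Ix Iy.
  assert (Ixy : forall z, Rmin x y <= z <= Rmax x y -> in_ival a b z)
    by (intros z; apply in_ival_between; assumption).
  destruct (MVT_gen f x y (fun _ => 0)) as [z [_ mvt]].
  - intros z zxy; apply df, Ixy; lra.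
  - intros z zxy; apply continuity_pt_filterlim, (ex_derive_continuous f).
    exists 0; apply df, Ixy, zxy.
  - lra.
Qed.

Lemma ival_continuous_sign (f : R -> R) (x y : R) :
  (forall t, in_ival a b t -> continuous f t) ->
  (forall t, in_ival a b t -> f t <> 0) ->
  in_ival a b x -> in_ival a b y -> 0 < f x * f y.
Proof.
  intros cf nz.
  assert (sign_lt : forall x y, in_ival a b x -> in_ival a b y -> x < y -> 0 < f x * f y).
  { clear x y; intros x y Ix Iy xy.
    assert (Ixy : forall z, x <= z <= y -> in_ival a b z).
    { intros z zxy; apply (in_ival_between x y); auto.
      rewrite Rmin_left, Rmax_right; lra. }
    assert (cont : forall g, (forall z, in_ival a b z -> continuous g z) ->
                     forall z, x <= z <= y -> continuity_pt g z)
      by (intros g cg z zxy; apply continuity_pt_filterlim, cg, Ixy, zxy).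
    destruct (Rlt_or_le 0 (f x * f y)) as [pos | npos]; [exact pos | exfalso].
    specialize (nz x Ix) as nzx; specialize (nz y Iy) as nzy.
    destruct (Rlt_or_le (f x) 0) as [fx | fx].
    - destruct (Ranalysis5.IVT_interv f x y) as [z [zxy fz]];
        [exact (cont f cf) | exact xy | exact fx | nra |].
      exact (nz z (Ixy z zxy) fz).
    - destruct (Ranalysis5.IVT_interv (fun t => - f t) x y) as [z [zxy fz]];
        [apply cont; intros; now apply (continuous_opp f), cf | exact xy | nra | nra |].
      apply (nz z (Ixy z zxy)); lra. }
  intros Ix Iy; destruct (Rtotal_order x y) as [xy | [<- | yx]].
  - now apply sign_lt.
  - specialize (nz x Ix); nra.
  - rewrite Rmult_comm; now apply sign_lt.
Qed.

Lemma ival_continuous_two_valued (f : R -> R) (p q x y : R) :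
  (forall t, in_ival a b t -> continuous f t) ->
  (forall t, in_ival a b t -> f t = p \/ f t = q) ->
  in_ival a b x -> in_ival a b y -> f x = f y.
Proof.
  intros cf fpq Ix Iy.
  destruct (Req_dec p q) as [<- | npq].
  { destruct (fpq x Ix), (fpq y Iy); congruence. }
  assert (sign : 0 < (f x - (p + q) / 2) * (f y - (p + q) / 2)).
  { apply (ival_continuous_sign (fun t => f t - (p + q) / 2)); auto.
    - intros t It; apply (continuous_minus f), continuous_const; auto.
    - intros t It; destruct (fpq t It) as [-> | ->]; lra. }
  assert (pq_sq : 0 < (p - q) * (p - q)) by (apply Rsqr_pos_lt; lra).
  destruct (fpq x Ix) as [fx | fx], (fpq y Iy) as [fy | fy]; rewrite fx, fy in *;
    auto; nra.
Qed.

End Interval.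

Lemma v3_ext (u w : v3) : vx u = vx w -> vy u = vy w -> vz u = vz w -> u = w.
Proof.
  destruct u as [[x y] z], w as [[x' y'] z']; cbv; intros -> -> ->; reflexivity.
Qed.

Definition v0 : v3 := mk3 0 0 0.

Ltac v3_ring :=
  intros;
  repeat match goal with u : v3 |- _ => destruct u as [[? ?] ?] end;
  cbv [dot cross vadd vscal v0 mk3 vx vy vz fst snd];
  first [ring | apply v3_ext; cbv [vx vy vz fst snd]; ring].

Lemma dot_comm (u w : v3) : dot u w = dot w u.
Proof. v3_ring. Qed.

Lemma dot_scal_l (k : R) (u w : v3) : dot (vscal k u) w = k * dot u w.
Proof. v3_ring. Qed.

Lemma dot_cross_l (u w : v3) : dot u (cross u w) = 0.
Proof. v3_ring. Qed.

Lemma cross_self (u : v3) : cross u u = v0.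
Proof. v3_ring. Qed.

Lemma dot_cross_r (u w : v3) : dot w (cross u w) = 0.
Proof. v3_ring. Qed.

Lemma vadd_v0_l (u : v3) : vadd v0 u = u.
Proof. v3_ring. Qed.

Lemma vscal_0 (u : v3) : vscal 0 u = v0.
Proof. v3_ring. Qed.

Lemma dot_cross_cross (u w z : v3) :
  dot (cross u w) (cross u z) = dot u u * dot w z - dot u w * dot u z.
Proof. v3_ring. Qed.

Lemma dot_cross_dot_cross (x l u w : v3) :
  dot x (cross u w) * dot l (cross u w) =
  dot x l * (dot u u * dot w w - dot u w * dot u w)
  - dot x u * (dot u l * dot w w - dot u w * dot w l)
  + dot x w * (dot u l * dot u w - dot u u * dot w l).
Proof. v3_ring. Qed.

Lemma cross_cross_expand (x u w : v3) :
  vadd (vscal (dot x w) (cross u w)) (vscal (- dot x (cross u w)) w) =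
  vadd (vscal (dot u w) (cross x w)) (vscal (dot w w) (cross u x)).
Proof. v3_ring. Qed.

Lemma cross_comb_cross (u w : v3) (p q : R) :
  cross u (vadd (vscal p w) (vscal q (cross u w))) =
  vadd (vscal p (cross u w)) (vscal q (vadd (vscal (dot u w) u) (vscal (- dot u u) w))).
Proof. v3_ring. Qed.

Lemma dot_comb (u w : v3) (p q : R) :
  dot (vadd (vscal p u) (vscal q w)) (vadd (vscal p u) (vscal q w)) =
  p * p * dot u u + 2 * p * q * dot u w + q * q * dot w w.
Proof. v3_ring. Qed.

Lemma cross_darboux (u w : v3) (K T : R) : dot u u = 1 -> dot u w = 0 ->
  cross u (vadd (vscal (- K) w) (vscal (- T) (cross u w))) =
  vadd (vscal T w) (vscal (- K) (cross u w)).
Proof. intros uu uw; rewrite cross_comb_cross, uu, uw; v3_ring. Qed.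

Lemma dot_darboux (u w : v3) (K T : R) : dot u u = 1 -> dot u w = 0 -> dot w w = 1 ->
  dot (vadd (vscal (- K) w) (vscal (- T) (cross u w)))
      (vadd (vscal (- K) w) (vscal (- T) (cross u w))) = K * K + T * T.
Proof. intros uu uw ww; rewrite dot_comb, dot_cross_r, dot_cross_cross, uu, uw, ww; ring. Qed.

Lemma dot_self_ge0 (u : v3) : 0 <= dot u u.
Proof. unfold dot; nra. Qed.

Lemma vnorm_eq1 (u : v3) : vnorm u = 1 <-> dot u u = 1.
Proof.
  unfold vnorm; split; intros E.
  - now rewrite <- (sqrt_sqrt _ (dot_self_ge0 u)), E, Rmult_1_r.
  - now rewrite E, sqrt_1.
Qed.

Definition normalize (u : v3) : v3 := vscal (/ vnorm u) u.

Lemma is_derive_eq (f : R -> R) (s l l' : R) : is_derive f s l -> l = l' -> is_derive f s l'.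
Proof. now intros df <-. Qed.

Lemma vderive_eq (f : R -> v3) (s : R) (d d' : v3) : vderive f s d -> d = d' -> vderive f s d'.
Proof. now intros df <-. Qed.

Lemma vderive_const (d : v3) (s : R) : vderive (fun _ => d) s v0.
Proof. split; [|split]; exact (is_derive_const _ s). Qed.

Lemma vderive_dot (f g : R -> v3) (s : R) (df dg : v3) :
  vderive f s df -> vderive g s dg ->
  is_derive (fun t => dot (f t) (g t)) s (dot df (g s) + dot (f s) dg).
Proof.
  intros (dfx & dfy & dfz) (dgx & dgy & dgz).
  eapply is_derive_eq.
  - exact (is_derive_plus _ _ s _ _
      (is_derive_plus _ _ s _ _ (is_derive_mult _ _ s _ _ dfx dgx Rmult_comm)
                                (is_derive_mult _ _ s _ _ dfy dgy Rmult_comm))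
      (is_derive_mult _ _ s _ _ dfz dgz Rmult_comm)).
  - cbv [plus mult dot]; simpl; ring.
Qed.

Lemma vderive_dot_const (f : R -> v3) (d : v3) (s : R) (df : v3) :
  vderive f s df -> is_derive (fun t => dot (f t) d) s (dot df d).
Proof.
  intros dfs; eapply is_derive_eq; [exact (vderive_dot _ _ s _ _ dfs (vderive_const d s))|].
  v3_ring.
Qed.

Lemma vderive_cross (f g : R -> v3) (s : R) (df dg : v3) :
  vderive f s df -> vderive g s dg ->
  vderive (fun t => cross (f t) (g t)) s (vadd (cross df (g s)) (cross (f s) dg)).
Proof.
  intros (dfx & dfy & dfz) (dgx & dgy & dgz).
  split; [|split]; eapply is_derive_eq;
    [ exact (is_derive_minus _ _ s _ _ (is_derive_mult _ _ s _ _ dfy dgz Rmult_comm)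
                                       (is_derive_mult _ _ s _ _ dfz dgy Rmult_comm))
    | 
    | exact (is_derive_minus _ _ s _ _ (is_derive_mult _ _ s _ _ dfz dgx Rmult_comm)
                                       (is_derive_mult _ _ s _ _ dfx dgz Rmult_comm))
    |
    | exact (is_derive_minus _ _ s _ _ (is_derive_mult _ _ s _ _ dfx dgy Rmult_comm)
                                       (is_derive_mult _ _ s _ _ dfy dgx Rmult_comm))
    | ];
    cbv [minus plus opp mult cross vadd mk3 vx vy vz fst snd]; simpl; ring.
Qed.

Lemma vderive_scal (h : R -> R) (f : R -> v3) (s dh : R) (df : v3) :
  is_derive h s dh -> vderive f s df ->
  vderive (fun t => vscal (h t) (f t)) s (vadd (vscal dh (f s)) (vscal (h s) df)).
Proof.
  intros dhs (dfx & dfy & dfz).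
  split; [|split]; eapply is_derive_eq;
    [ exact (is_derive_mult _ _ s _ _ dhs dfx Rmult_comm) |
    | exact (is_derive_mult _ _ s _ _ dhs dfy Rmult_comm) |
    | exact (is_derive_mult _ _ s _ _ dhs dfz Rmult_comm) | ];
    cbv [plus mult vscal vadd mk3 vx vy vz fst snd]; simpl; ring.
Qed.

Lemma vderive_unique (f : R -> v3) (s : R) (d1 d2 : v3) :
  vderive f s d1 -> vderive f s d2 -> d1 = d2.
Proof.
  intros (x1 & y1 & z1) (x2 & y2 & z2).
  apply is_derive_unique in x1, y1, z1, x2, y2, z2.
  apply v3_ext; congruence.
Qed.

Lemma ival_eq_of_vderive_0 (a b : Rbar) (f : R -> v3) (x y : R) :
  (forall t, in_ival a b t -> vderive f t v0) ->
  in_ival a b x -> in_ival a b y -> f x = f y.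
Proof.
  intros df Ix Iy; apply v3_ext;
    [ apply (ival_eq_of_is_derive_0 a b (fun t => vx (f t)))
    | apply (ival_eq_of_is_derive_0 a b (fun t => vy (f t)))
    | apply (ival_eq_of_is_derive_0 a b (fun t => vz (f t))) ];
    auto; intros t It; apply (df t It).
Qed.

Definition vDerive_n (n : nat) (f : R -> v3) (t : R) : v3 :=
  mk3 (Derive_n (fun u => vx (f u)) n t) (Derive_n (fun u => vy (f u)) n t)
      (Derive_n (fun u => vz (f u)) n t).

Lemma vderive_vDerive_n (a b : Rbar) (f : R -> v3) (n : nat) (t : R) :
  vsmooth_on a b f -> in_ival a b t -> vderive (vDerive_n n f) t (vDerive_n (S n) f t).
Proof.
  intros (fx & fy & fz) It.
  split; [|split]; apply Derive_correct;
    [exact (fx (S n) t It) | exact (fy (S n) t It) | exact (fz (S n) t It)].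
Qed.

Section UnitCurve.

Variables (a b : Rbar) (v dv d2v d3v : R -> v3).

Hypothesis ab_lt : Rbar_lt a b.
Hypothesis v_unit : forall t, in_ival a b t -> dot (v t) (v t) = 1.
Hypothesis v_deriv : forall t, in_ival a b t -> vderive v t (dv t).
Hypothesis dv_deriv : forall t, in_ival a b t -> vderive dv t (d2v t).
Hypothesis d2v_deriv : forall t, in_ival a b t -> vderive d2v t (d3v t).
Hypothesis dv_pos : forall t, in_ival a b t -> 0 < dot (dv t) (dv t).

Definition binormal (t : R) : v3 := normalize (cross (v t) (dv t)).

Definition geodesic_curvature (t : R) : R :=
  dot (d2v t) (cross (v t) (dv t)) / (dot (dv t) (dv t) * sqrt (dot (dv t) (dv t))).

Lemma dot_v_dv (t : R) : in_ival a b t -> dot (v t) (dv t) = 0.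
Proof.
  intros It.
  assert (d := is_derive_ival_const a b _ 1 t _ v_unit It
                 (vderive_dot _ _ t _ _ (v_deriv t It) (v_deriv t It))).
  rewrite dot_comm in d; lra.
Qed.

Lemma dot_v_d2v (t : R) : in_ival a b t -> dot (v t) (d2v t) = - dot (dv t) (dv t).
Proof.
  intros It.
  assert (d := is_derive_ival_const a b _ 0 t _ dot_v_dv It
                 (vderive_dot _ _ t _ _ (v_deriv t It) (dv_deriv t It))).
  lra.
Qed.

Lemma dot_cross_v_dv (t : R) : in_ival a b t ->
  dot (cross (v t) (dv t)) (cross (v t) (dv t)) = dot (dv t) (dv t).
Proof. intros It; rewrite dot_cross_cross, v_unit, dot_v_dv; auto; ring. Qed.

Lemma binormal_eq (t : R) : in_ival a b t ->
  binormal t = vscal (/ sqrt (dot (dv t) (dv t))) (cross (v t) (dv t)).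
Proof. intros It; unfold binormal, normalize, vnorm; now rewrite dot_cross_v_dv. Qed.

Lemma dot_binormal_r (x : v3) (t : R) : in_ival a b t ->
  dot x (binormal t) = dot x (cross (v t) (dv t)) / sqrt (dot (dv t) (dv t)).
Proof.
  intros It; rewrite (binormal_eq t It), dot_comm, dot_scal_l, (dot_comm _ x); field.
  apply Rgt_not_eq, sqrt_lt_R0, dv_pos, It.
Qed.

Lemma binormal_unit (t : R) : in_ival a b t -> dot (binormal t) (binormal t) = 1.
Proof.
  intros It; specialize (dv_pos t It) as S_pos.
  rewrite (dot_binormal_r _ t It), dot_comm, (dot_binormal_r _ t It), (dot_cross_v_dv t It).
  rewrite <- (sqrt_sqrt (dot (dv t) (dv t))) at 1 by lra.
  field; apply Rgt_not_eq, sqrt_lt_R0, S_pos.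
Qed.

Lemma dot_v_binormal (t : R) : in_ival a b t -> dot (v t) (binormal t) = 0.
Proof. intros It; rewrite (dot_binormal_r _ t It), dot_cross_l; unfold Rdiv; ring. Qed.

Lemma dot_d2v_binormal (t : R) : in_ival a b t ->
  dot (d2v t) (binormal t) = geodesic_curvature t * dot (dv t) (dv t).
Proof.
  intros It; specialize (dv_pos t It) as S_pos.
  rewrite (dot_binormal_r _ t It); unfold geodesic_curvature.
  field; split; [apply Rgt_not_eq, sqrt_lt_R0, S_pos | lra].
Qed.

Lemma frame_expansion (x l : v3) (t : R) : in_ival a b t ->
  dot (dv t) (dv t) * dot x l =
  dot (dv t) (dv t) * dot x (v t) * dot (v t) l + dot x (dv t) * dot (dv t) l
  + dot (dv t) (dv t) * dot x (binormal t) * dot (binormal t) l.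
Proof.
  intros It.
  rewrite (dot_comm (binormal t) l), !(dot_binormal_r _ t It).
  pose proof (dot_cross_dot_cross x l (v t) (dv t)) as gram.
  rewrite (v_unit t It), (dot_v_dv t It) in gram.
  assert (s_pos : 0 < sqrt (dot (dv t) (dv t))) by apply sqrt_lt_R0, dv_pos, It.
  assert (ss := sqrt_sqrt _ (Rlt_le _ _ (dv_pos t It))).
  set (s := sqrt (dot (dv t) (dv t))) in *; set (S := dot (dv t) (dv t)) in *.
  replace (S * (dot x (cross (v t) (dv t)) / s) * (dot l (cross (v t) (dv t)) / s))
    with (dot x (cross (v t) (dv t)) * dot l (cross (v t) (dv t)))
    by (rewrite <- ss; field; lra).
  rewrite gram; ring.
Qed.

Lemma vderive_cross_v_dv (t : R) : in_ival a b t ->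
  vderive (fun u => cross (v u) (dv u)) t (cross (v t) (d2v t)).
Proof.
  intros It; eapply vderive_eq; [exact (vderive_cross _ _ t _ _ (v_deriv t It) (dv_deriv t It))|].
  now rewrite cross_self, vadd_v0_l.
Qed.

Lemma binormal_derive (t : R) : in_ival a b t ->
  vderive binormal t (vscal (- geodesic_curvature t) (dv t)).
Proof.
  intros It.
  set (P := fun u => cross (v u) (dv u)).
  assert (dP := vderive_cross_v_dv t It); fold P in dP.
  assert (P_pos : 0 < dot (P t) (P t)) by (unfold P; rewrite dot_cross_v_dv; auto).
  assert (dnorm := is_derive_inv _ t _ (is_derive_sqrt _ t _ (vderive_dot _ _ t _ _ dP dP) P_pos)
                     (Rgt_not_eq _ _ (sqrt_lt_R0 _ P_pos))).
  eapply vderive_eq; [exact (vderive_scal _ P t _ _ dnorm dP)|].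
  assert (expand := cross_cross_expand (d2v t) (v t) (dv t)).
  assert (dot_X_P : dot (cross (v t) (d2v t)) (P t) = dot (d2v t) (dv t))
    by (unfold P; rewrite dot_cross_cross, v_unit, dot_v_dv; auto; ring).
  unfold P in *; rewrite (dot_v_dv t It) in expand.
  rewrite (dot_comm (cross (v t) (dv t)) (cross (v t) (d2v t))), dot_X_P, (dot_cross_v_dv t It).
  unfold geodesic_curvature.
  assert (s_pos : 0 < sqrt (dot (dv t) (dv t))) by apply sqrt_lt_R0, dv_pos, It.
  assert (ss := sqrt_sqrt _ (Rlt_le _ _ (dv_pos t It))).
  set (s := sqrt (dot (dv t) (dv t))) in *; set (S := dot (dv t) (dv t)) in *.
  set (e := dot (d2v t) (dv t)) in *; set (g := dot (d2v t) (cross (v t) (dv t))) in *.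
  (* [expand] reads [S (v x d2v) = e (v x dv) - g dv]. *)
  assert (comp : forall p x d w, e * p + - g * d = 0 * w + S * x ->
            - ((e + e) / (2 * s)) / s ^ 2 * p + / s * x = - (g / (S * s)) * d).
  { intros p x d w E; rewrite <- ss in *.
    replace x with ((e * p - g * d) / (s * s)) by (field_simplify_eq; lra).
    field; lra. }
  apply v3_ext; eapply comp;
    [exact (f_equal vx expand) | exact (f_equal vy expand) | exact (f_equal vz expand)].
Qed.

Lemma ex_derive_geodesic_curvature (t : R) : in_ival a b t -> ex_derive geodesic_curvature t.
Proof.
  intros It; specialize (dv_pos t It) as S_pos.
  assert (dS := vderive_dot _ _ t _ _ (dv_deriv t It) (dv_deriv t It)).
  unfold geodesic_curvature, Rdiv; apply ex_derive_mult.
  - eexists; exact (vderive_dot _ _ t _ _ (d2v_deriv t It) (vderive_cross_v_dv t It)).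
  - apply ex_derive_inv.
    + apply ex_derive_mult; eexists; [exact dS | exact (is_derive_sqrt _ t _ dS S_pos)].
    + apply Rgt_not_eq, Rmult_lt_0_compat; [|apply sqrt_lt_R0]; exact S_pos.
Qed.

Lemma binormal_helix_of_v_helix (d : v3) (c : R) :
  dot d d = 1 -> (forall t, in_ival a b t -> dot (v t) d = c) ->
  exists c', forall t, in_ival a b t -> dot (binormal t) d = c'.
Proof.
  intros d_unit vd.
  destruct (in_ival_inhabited a b ab_lt) as [s0 I0].
  assert (dv_d : forall t, in_ival a b t -> dot (dv t) d = 0)
    by (intros t It; exact (is_derive_ival_const a b _ c t _ vd It
                              (vderive_dot_const _ d t _ (v_deriv t It)))).
  assert (Bd_sq : forall t, in_ival a b t -> dot (binormal t) d * dot (binormal t) d = 1 - c * c).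
  { intros t It; specialize (dv_pos t It) as S_pos.
    assert (E := frame_expansion d d t It).
    rewrite d_unit, (dot_comm d (v t)), (dot_comm d (dv t)), (dot_comm d (binormal t)),
      (vd t It), (dv_d t It) in E.
    apply (Rmult_eq_reg_l (dot (dv t) (dv t))); lra. }
  exists (dot (binormal s0) d); intros t It.
  apply (ival_continuous_two_valued a b (fun u => dot (binormal u) d)
           (dot (binormal s0) d) (- dot (binormal s0) d)); auto.
  - intros u Iu; apply (ex_derive_continuous (fun u => dot (binormal u) d)).
    eexists; exact (vderive_dot_const _ d u _ (binormal_derive u Iu)).
  - intros u Iu; apply Rsqr_eq; unfold Rsqr; now rewrite (Bd_sq u Iu), (Bd_sq s0 I0).
Qed.

Section BinormalHelix.

Variables (l : v3) (c : R).
Hypothesis l_unit : dot l l = 1.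
Hypothesis binormal_l : forall t, in_ival a b t -> dot (binormal t) l = c.

Lemma geodesic_curvature_dv_l (t : R) : in_ival a b t ->
  geodesic_curvature t * dot (dv t) l = 0.
Proof.
  intros It.
  assert (E := is_derive_ival_const a b _ c t _ binormal_l It
                 (vderive_dot_const _ l t _ (binormal_derive t It))).
  rewrite dot_scal_l in E; lra.
Qed.

Lemma geodesic_curvature_helix (t : R) : in_ival a b t -> geodesic_curvature t <> 0 ->
  c * c * (geodesic_curvature t * geodesic_curvature t) = 1 - c * c.
Proof.
  intros It k_nz; specialize (dv_pos t It) as S_pos.
  assert (dv_l : dot (dv t) l = 0).
  { destruct (Rmult_integral _ _ (geodesic_curvature_dv_l t It)); tauto. }
  assert (d2v_l : dot (d2v t) l = 0).
  { destruct (ex_derive_geodesic_curvature t It) as [k' dk].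
    assert (E := is_derive_ival_const a b _ 0 t _ geodesic_curvature_dv_l It
                   (is_derive_mult _ _ t _ _ dk
                      (vderive_dot_const _ l t _ (dv_deriv t It)) Rmult_comm)).
    cbv [plus mult] in E; simpl in E; rewrite dv_l in E.
    destruct (Rmult_integral (geodesic_curvature t) (dot (d2v t) l)); [lra | tauto | auto]. }
  assert (El := frame_expansion l l t It).
  assert (Ed := frame_expansion (d2v t) l t It).
  rewrite l_unit, (dot_comm l (v t)), (dot_comm l (dv t)), (dot_comm l (binormal t)),
    dv_l, (binormal_l t It) in El.
  rewrite d2v_l, dv_l, (binormal_l t It), (dot_comm (d2v t) (v t)), (dot_v_d2v t It),
    (dot_d2v_binormal t It) in Ed.
  set (g := dot (v t) l) in *; set (k := geodesic_curvature t) in *.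
  set (S := dot (dv t) (dv t)) in *.
  assert (g_sq : g * g = 1 - c * c)
    by (apply (Rmult_eq_reg_l S); [clear - El; lra | lra]).
  assert (g_eq : g = k * c).
  { apply (Rmult_eq_reg_l (S * S)); [clear - Ed; lra |].
    apply Rgt_not_eq, Rmult_lt_0_compat; exact S_pos. }
  rewrite <- g_sq, g_eq; ring.
Qed.

Lemma geodesic_curvature_dichotomy :
  (forall t, in_ival a b t -> geodesic_curvature t = 0) \/
  (forall t, in_ival a b t -> geodesic_curvature t <> 0).
Proof.
  set (f := fun t => c * c * (geodesic_curvature t * geodesic_curvature t)).
  destruct (classic (exists t0, in_ival a b t0 /\ geodesic_curvature t0 <> 0))
    as [[t0 [I0 k0]] | none].
  - right; intros t It kt.
    assert (f_eq : f t = f t0).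
    { apply (ival_continuous_two_valued a b f 0 (1 - c * c)); auto.
      - intros u Iu; apply (ex_derive_continuous f); unfold f.
        apply ex_derive_mult; [apply ex_derive_const|].
        apply ex_derive_mult; apply ex_derive_geodesic_curvature, Iu.
      - intros u Iu; unfold f.
        destruct (Req_dec (geodesic_curvature u) 0) as [-> | ku]; [left; ring|].
        right; apply geodesic_curvature_helix; auto. }
    assert (h0 := geodesic_curvature_helix t0 I0 k0).
    assert (k0_sq : 0 < geodesic_curvature t0 * geodesic_curvature t0) by (apply Rsqr_pos_lt; auto).
    unfold f in f_eq; rewrite kt in f_eq.
    assert (c_sq : c * c = 1) by lra.
    rewrite c_sq in h0; lra.
  - left; intros t It; apply NNPP; intros kt; apply none; eauto.
Qed.

Lemma v_helix_of_binormal_helix :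
  exists d, dot d d = 1 /\ exists c', forall t, in_ival a b t -> dot (v t) d = c'.
Proof.
  destruct (in_ival_inhabited a b ab_lt) as [s0 I0].
  destruct geodesic_curvature_dichotomy as [flat | curved].
  - exists (binormal s0); split; [exact (binormal_unit s0 I0)|].
    exists 0; intros t It.
    rewrite (ival_eq_of_vderive_0 a b binormal s0 t); auto using dot_v_binormal.
    intros u Iu; eapply vderive_eq; [exact (binormal_derive u Iu)|].
    rewrite (flat u Iu), Ropp_0; apply vscal_0.
  - exists l; split; [exact l_unit|].
    exists (dot (v s0) l); intros t It.
    apply (ival_eq_of_is_derive_0 a b (fun u => dot (v u) l)); auto.
    intros u Iu; eapply is_derive_eq; [exact (vderive_dot_const _ l u _ (v_deriv u Iu))|].
    destruct (Rmult_integral _ _ (geodesic_curvature_dv_l u Iu)) as [k0 | dv_l];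
      [exfalso; exact (curved u Iu k0) | exact dv_l].
Qed.

End BinormalHelix.

End UnitCurve.

Section MyllerConfiguration.

Variables (a b : Rbar) (r xi mu v : R -> v3) (G K T : R -> R).
Hypothesis config : Myller_config a b r xi mu v G K T.
Hypothesis KT_nz : forall s, in_ival a b s -> (K s, T s) <> (0, 0).

Lemma myller_vderive_v (n : nat) (t : R) : in_ival a b t ->
  vderive (vDerive_n n v) t (vDerive_n (S n) v t).
Proof. apply vderive_vDerive_n, config. Qed.

Lemma myller_v_unit (t : R) : in_ival a b t -> dot (v t) (v t) = 1.
Proof. intros It; apply vnorm_eq1, (proj2 (proj2 (proj2 config)) t It). Qed.

Lemma myller_dv_eq (t : R) : in_ival a b t ->
  vDerive_n 1 v t = vadd (vscal (- K t) (xi t)) (vscal (- T t) (cross (v t) (xi t))).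
Proof.
  intros It; destruct (proj2 (proj2 (proj2 config)) t It) as (_ & _ & _ & _ & <- & _ & _ & dv).
  exact (vderive_unique v t _ _ (myller_vderive_v 0 t It) dv).
Qed.

Lemma myller_dv_pos (t : R) : in_ival a b t -> 0 < dot (vDerive_n 1 v t) (vDerive_n 1 v t).
Proof.
  intros It; destruct (proj2 (proj2 (proj2 config)) t It) as (_ & xi_unit & _ & xi_v & _).
  rewrite (myller_dv_eq t It), dot_darboux;
    [| apply myller_v_unit, It | now rewrite dot_comm | now apply vnorm_eq1].
  destruct (Req_dec (K t) 0) as [K0 | K0]; [destruct (Req_dec (T t) 0) as [T0 | T0] |].
  - now elim (KT_nz t It); rewrite K0, T0.
  - assert (0 < T t * T t) by (apply Rsqr_pos_lt, T0); nra.
  - assert (0 < K t * K t) by (apply Rsqr_pos_lt, K0); nra.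
Qed.

Lemma W_o_bar_binormal (t : R) : in_ival a b t ->
  W_o_bar xi mu K T t = binormal v (vDerive_n 1 v) t.
Proof.
  intros It; destruct (proj2 (proj2 (proj2 config)) t It) as (_ & _ & _ & xi_v & mu_eq & _).
  unfold W_o_bar, binormal, W_o; rewrite (myller_dv_eq t It), cross_darboux, mu_eq;
    [reflexivity | apply myller_v_unit, It | now rewrite dot_comm].
Qed.

End MyllerConfiguration.

Theorem theorem28 (a b : Rbar) (r xi mu v : R -> v3) (G K T : R -> R) :
  Rbar_lt a b ->
  Myller_config a b r xi mu v G K T ->
  (forall s, in_ival a b s -> (K s, T s) <> (0, 0)) ->
  (Wo_helix a b xi mu K T <-> v_helix a b v).
Proof.
  intros ab config KT_nz.
  assert (derivs := fun n => myller_vderive_v a b r xi mu v G K T config n).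
  assert (v_unit := myller_v_unit a b r xi mu v G K T config).
  assert (dv_pos := myller_dv_pos a b r xi mu v G K T config KT_nz).
  assert (W_eq := W_o_bar_binormal a b r xi mu v G K T config).
  split.
  - intros (l & l_unit & c & Wl).
    destruct (v_helix_of_binormal_helix a b v (vDerive_n 1 v) (vDerive_n 2 v) (vDerive_n 3 v)
                ab v_unit (derivs 0%nat) (derivs 1%nat) (derivs 2%nat) dv_pos l c)
      as (d & d_unit & vd); [now apply vnorm_eq1 | intros t It; rewrite <- W_eq; auto |].
    exists d; split; [now apply vnorm_eq1 | exact vd].
  - intros (d & d_unit & c & vd).
    destruct (binormal_helix_of_v_helix a b v (vDerive_n 1 v) (vDerive_n 2 v)
                ab v_unit (derivs 0%nat) (derivs 1%nat) dv_pos d c) as (c' & Bd);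
      [now apply vnorm_eq1 | exact vd |].
    exists d; split; [exact d_unit|]; exists c'; intros t It; rewrite W_eq; auto.
Qed.
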